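(* For every $n>0$ and every set $U$ with $\mathbb R^n_{\mathrm{rect}}\subseteq U\subseteq\mathbb R^n_{\mathrm{reg}}$, the region structure $\mathfrak R(\mathbb R^n,U)$ is domino ready.
   Context: $\mathbb R^n$ has the Euclidean topology with interior $\mathbb I$; $\mathbb R^n_{\mathrm{reg}}$ is the set of non-empty regular closed subsets ($\mathbb C\mathbb I(s)=s$); $\mathbb R^n_{\mathrm{rect}}$ the set of products $\prod_{i=1}^nC_i$ of non-singleton closed intervals. $\mathfrak R(\mathbb R^n,U)$ has domain $U$ and relations $\mathrm{tpp}(s,t)$ iff $s\subseteq t$, $s\not\subseteq\mathbb I(t)$, $s\ne t$, and $\mathrm{ntpp}(s,t)$ iff $s\subseteq\mathbb I(t)$, $s\ne t$ (plus the other RCC8 relations). Let $\lambda$ be the enumeration of $\mathbb N\times\mathbb N$ along anti-diagonals from floor to wall: $\lambda(k(k+1)/2+m+1)=(k-m,m)$ for $k\ge0$, $0\le m\le k$ (so $\lambda(1)=(0,0)$, $\lambda(2)=(1,0)$, $\lambda(3)=(0,1)$, $\lambda(4)=(2,0)$, ...). A region structure with domain $W$ is domino ready if $W$ contains sequences $x_1,x_2,\dots$ and $y_1,y_2,\dots$ such that for all $i,j\ge1$: (1) $x_i\,\mathrm{tpp}\,x_{i+1}$; (2) $x_i\,\mathrm{ntpp}\,x_j$ if $j>i+1$; (3) $x_{2i-1}\,\mathrm{tpp}\,y_i$; (4) $y_i\,\mathrm{tpp}\,x_{2j-1}$ iff $\lambda(j)$ is reached from $\lambda(i)$ by one step to the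 right (first coordinate $+1$); (5) $y_i\,\mathrm{ntpp}\,y_j$ if $j>i$. *)

From HB Require Import structures.
From mathcomp Require Import all_boot all_order all_algebra.
From mathcomp Require Import all_classical all_reals topology normedtype.
From mathcomp Require Import Rstruct Rstruct_topology.
Set Implicit Arguments. Unset Strict Implicit. Unset Printing Implicit Defensive.
Import Order.TTheory GRing.Theory Num.Theory.
Local Open Scope classical_set_scope.
Local Open Scope ring_scope.

Notation Rn n := ('rV[Rdefinitions.R]_n).

Definition reg_closed (n : nat) (s : set (Rn n)) : Prop :=
  s !=set0 /\ closure (interior s) = s.

Definition rect (n : nat) (s : set (Rn n)) : Prop :=
  exists a b : 'I_n -> Rdefinitions.R,
    (forall i, a i < b i) /\ s = [set x | forall i, a i <= x ord0 i <= b i].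

Definition tpp (n : nat) (s t : set (Rn n)) : Prop :=
  s `<=` t /\ ~ (s `<=` interior t) /\ s <> t.

Definition ntpp (n : nat) (s t : set (Rn n)) : Prop :=
  s `<=` interior t /\ s <> t.

Definition lambda_is (j : nat) (p : nat * nat) : Prop :=
  exists k m : nat, (m <= k)%N /\ j = ((k * k.+1) %/ 2 + m + 1)%N /\ p = ((k - m)%N, m).

Definition right_step (i j : nat) : Prop :=
  exists a b : nat, lambda_is i (a, b) /\ lambda_is j (a.+1, b).

(* A region structure with domain W (and relations tpp, ntpp) is domino ready.
   Sequences are indexed from 1 (values at index 0 are irrelevant). *)
Definition domino_ready (T : Type) (W : set T) (tppR ntppR : T -> T -> Prop) : Prop :=
  exists x y : nat -> T,
    (forall i, (1 <= i)%N -> W (x i) /\ W (y i)) /\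
    (forall i, (1 <= i)%N -> tppR (x i) (x i.+1)) /\
    (forall i j, (1 <= i)%N -> (j > i.+1)%N -> ntppR (x i) (x j)) /\
    (forall i, (1 <= i)%N -> tppR (x (2 * i - 1)%N) (y i)) /\
    (forall i j, (1 <= i)%N -> (1 <= j)%N ->
       (tppR (y i) (x (2 * j - 1)%N) <-> right_step i j)) /\
    (forall i j, (1 <= i)%N -> (j > i)%N -> ntppR (y i) (y j)).

Arguments reg_closed n s : clear implicits.
Arguments rect n s : clear implicits.
Arguments tpp n s t : clear implicits.
Arguments ntpp n s t : clear implicits.

From mathcomp Require Import all_boot all_order all_algebra.
From mathcomp Require Import all_classical all_reals topology normedtype.
From mathcomp Require Import Rstruct Rstruct_topology.
From mathcomp Require Import lra zify.
Import Order.TTheory GRing.Theory Num.Theory.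
Local Open Scope classical_set_scope.

(* Use the boxes [-l, r]^n, which are rectangles.  One box is tangential inside
   another exactly when it grows while keeping one of its two faces, and
   non-tangential as soon as both faces move outwards.  Growing alternately on the
   right and on the left gives the chain x with x_(2j-1) = [-j, j]^n, and
   y_i = [-i, r]^n is tangential inside x_(2j-1) iff j = r; so r is taken to be the
   index of the right neighbour of lambda(i), which is i + k + 1 when lambda(i) lies
   on the k-th anti-diagonal. *)

Definition tri (k : nat) : nat := k * k.+1 %/ 2.

Lemma triS k : tri k.+1 = tri k + k.+1.
Proof. rewrite /tri; lia. Qed.

Lemma leq_tri : {homo tri : k k' / k <= k'}.
Proof. by apply: homo_leq => [//|k k' k''|k]; [exact: leq_trans | rewrite triS leq_addr]. Qed.

Lemma tri_addn_inj k m k' m' :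
  m <= k -> m' <= k' -> tri k + m = tri k' + m' -> k = k'.
Proof.
have lt_tri a b a' : b <= a -> a < a' -> tri a + b < tri a'.
  move=> le_ba lt_aa'; have := leq_tri _ _ lt_aa'; rewrite triS; lia.
move=> le_mk le_mk' E.
by case: (ltngtP k k') => // [/(lt_tri _ _ _ le_mk)|/(lt_tri _ _ _ le_mk')]; lia.
Qed.

Lemma lambda_isE j a b : lambda_is j (a, b) <-> j = (tri (a + b) + b).+1.
Proof.
split=> [[k [m [le_mk [-> [-> ->]]]]]|->].
  by rewrite subnK // /tri addn1.
by exists (a + b), b; rewrite leq_addl addnK addn1.
Qed.

(* [antidiag i = (k, m)] encodes [i = tri k + m] with [m <= k], i.e.
   lambda(i + 1) = (k - m, m). *)
Fixpoint antidiag (i : nat) : nat * nat :=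
  if i is i'.+1 then
    let: (k, m) := antidiag i' in if m < k then (k, m.+1) else (k.+1, 0)
  else (0, 0).

Lemma antidiagP i :
  (antidiag i).2 <= (antidiag i).1 /\ i = tri (antidiag i).1 + (antidiag i).2.
Proof.
elim: i => [//|i] /=; case: (antidiag i) => k m /= [le_mk ->].
by case: ltnP => lt_km /=; rewrite ?triS; lia.
Qed.

Lemma leq_antidiag : {homo (fun i => (antidiag i).1) : i j / i <= j}.
Proof.
apply: homo_leq => [//|i j k|i /=]; first exact: leq_trans.
by case: (antidiag i) => k m; case: ifP.
Qed.

Definition right_neighbour (i : nat) : nat := i + (antidiag i.-1).1 + 1.

Lemma right_stepP i j : 0 < i -> right_step i j <-> j = right_neighbour i.
Proof.
move=> i_gt0; have [le_mk Ei] := antidiagP i.-1.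
rewrite /right_step /right_neighbour; split.
  move=> [a [b [/lambda_isE Ea /lambda_isE ->]]].
  have Eab : a + b = (antidiag i.-1).1.
    by apply: (@tri_addn_inj _ b _ _ (leq_addl a b) le_mk); lia.
  by move: Ea; rewrite addSn Eab triS; lia.
move=> ->; exists ((antidiag i.-1).1 - (antidiag i.-1).2), (antidiag i.-1).2.
by rewrite !lambda_isE addSn subnK // triS; lia.
Qed.

Lemma right_neighbour_gt i : i < right_neighbour i.
Proof. by rewrite /right_neighbour; lia. Qed.

Lemma ltn_right_neighbour i j : 0 < i -> i < j -> right_neighbour i < right_neighbour j.
Proof.
move=> i_gt0 lt_ij; have := leq_antidiag i.-1 j.-1.
by rewrite /right_neighbour; lia.
Qed.

Local Open Scope ring_scope.

Section Cubes.
Variable n : nat.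
Hypothesis n_gt0 : (0 < n)%N.

Local Notation R := Rdefinitions.R.

Definition cube (a b : R) : set (Rn n) := [set x | forall i, a <= x ord0 i <= b].

Lemma cube_constE (a b v : R) : cube a b (const_mx v) <-> a <= v <= b.
Proof. by split=> [/(_ (Ordinal n_gt0))|abv i]; rewrite mxE. Qed.

Lemma cube_ends (a b : R) : a <= b -> cube a b (const_mx a) /\ cube a b (const_mx b).
Proof. by move=> le_ab; split; apply/cube_constE; rewrite lexx ?andbT. Qed.

Lemma subset_cubeP (a b c d : R) : a <= b -> cube a b `<=` cube c d <-> c <= a /\ b <= d.
Proof.
move=> le_ab; split=> [sub|[le_ca le_bd] x xab i].
  by have [/sub/cube_constE/andP[? _] /sub/cube_constE/andP[_ ?]] := cube_ends _ _ le_ab.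
by have /andP[? ?] := xab i; apply/andP; split; lra.
Qed.

Lemma cube_sub_interior (a b c d : R) : c < a -> b < d -> cube a b `<=` interior (cube c d).
Proof.
move=> lt_ca lt_bd x xab; apply/nbhs_ballP.
have e_gt0 : 0 < Num.min (a - c) (d - b) by rewrite lt_min !subr_gt0 lt_ca lt_bd.
exists (Num.min (a - c) (d - b)) => //.
move=> y [_ xy] i; have /andP[? ?] := xab i; move: (xy ord0 i).
rewrite /ball /= lt_min !ltr_distlC => /andP[/andP[? ?] /andP[? ?]].
by apply/andP; split; lra.
Qed.

Lemma interior_cube_const (c d v : R) : interior (cube c d) (const_mx v) -> c < v < d.
Proof.
move=> /nbhs_ballP[e /= e_gt0 sub].
have near_v w : `|v - w| < e -> cube c d (const_mx w).
  by move=> vw; apply: sub; split=> // i j; rewrite !mxE.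
have /cube_constE/andP[? _] : cube c d (const_mx (v - e / 2)).
  by apply: near_v; rewrite opprB addrC subrK ger0_norm; lra.
have /cube_constE/andP[_ ?] : cube c d (const_mx (v + e / 2)).
  by apply: near_v; rewrite opprD addNKr normrN ger0_norm; lra.
by apply/andP; split; lra.
Qed.

Lemma cube_inj (a b c d : R) : a <= b -> cube a b = cube c d -> c = a /\ d = b.
Proof.
move=> le_ab E.
have [le_ca le_bd] : c <= a /\ b <= d by apply/(subset_cubeP _ _ _ _ le_ab); rewrite E.
have [le_ac le_db] : a <= c /\ d <= b.
  by apply/(subset_cubeP _ _ _ _ (le_trans le_ca (le_trans le_ab le_bd))); rewrite E.
by split; apply/eqP; rewrite eq_le ?le_ca ?le_ac ?le_bd ?le_db.
Qed.

Lemma tpp_cubeP (a b c d : R) : a <= b ->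
  tpp n (cube a b) (cube c d) <->
  [&& c <= a, b <= d, (c == a) || (b == d) & (c < a) || (b < d)].
Proof.
move=> le_ab; have [a_in b_in] := cube_ends _ _ le_ab.
split=> [[sub [not_int neq]] | /and4P[le_ca le_bd eq_side lt_side]].
  have [le_ca le_bd] := (subset_cubeP _ _ c d le_ab).1 sub.
  have not_both_lt : ~ (c < a /\ b < d).
    by move=> [lt_ca lt_bd]; apply/not_int/cube_sub_interior.
  have not_both_eq : ~ (c = a /\ b = d) by move=> [ca bd]; apply: neq; rewrite ca bd.
  lra.
split; first exact/subset_cubeP.
split=> [sub | /cube_inj-/(_ le_ab)]; last lra.
have /interior_cube_const ? := sub _ a_in.
have /interior_cube_const ? := sub _ b_in.
lra.
Qed.

Lemma ntpp_cube (a b c d : R) : a <= b -> c < a -> b < d -> ntpp n (cube a b) (cube c d).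
Proof.
move=> le_ab lt_ca lt_bd; split; first exact: cube_sub_interior.
by move=> /cube_inj-/(_ le_ab); lra.
Qed.

Lemma rect_cube (a b : R) : a < b -> rect n (cube a b).
Proof. by move=> lt_ab; exists (fun=> a), (fun=> b). Qed.

Definition box (l r : nat) : set (Rn n) := cube (- l%:R) r%:R.

Lemma tpp_boxP (l r l' r' : nat) :
  tpp n (box l r) (box l' r') <->
  [&& l <= l', r <= r', (l' == l) || (r == r') & (l < l') || (r < r')]%N.
Proof.
rewrite tpp_cubeP; last by rewrite (@le_trans _ _ 0) // oppr_le0.
by rewrite lerN2 !ler_nat eqr_opp !eqr_nat ltrN2 !ltr_nat.
Qed.

Lemma ntpp_box (l r l' r' : nat) : (l < l')%N -> (r < r')%N -> ntpp n (box l r) (box l' r').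
Proof.
move=> lt_ll' lt_rr'; apply: ntpp_cube; rewrite ?ltrN2 ?ltr_nat //.
by rewrite (@le_trans _ _ 0) // oppr_le0.
Qed.

Lemma rect_box (l r : nat) : (0 < l + r)%N -> rect n (box l r).
Proof. by move=> lr_gt0; apply: rect_cube; rewrite -subr_gt0 opprK -natrD ltr0n addnC. Qed.

End Cubes.

Theorem lemma5p8 (n : nat) (U : set (set (Rn n))) :
  (0 < n)%N ->
  rect n `<=` U -> U `<=` reg_closed n ->
  domino_ready U (tpp n) (ntpp n).
Proof.
move=> n_gt0 rect_sub_U _.
exists (fun i => box n (i.+1 %/ 2) (i %/ 2).+1), (fun i => box n i (right_neighbour i)).
split; [|split; [|split; [|split; [|split]]]].
- by move=> i i_gt0; split; apply/rect_sub_U/rect_box; lia.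
- by move=> i i_gt0; apply/tpp_boxP; lia.
- by move=> i j i_gt0 lt_ij; apply: ntpp_box; lia.
- by move=> i i_gt0; apply/tpp_boxP; have := right_neighbour_gt i; lia.
- move=> i j i_gt0 j_gt0; rewrite right_stepP // tpp_boxP //.
  by have := right_neighbour_gt i; split; [lia | move=> ->; lia].
- by move=> i j i_gt0 lt_ij; apply: ntpp_box => //; exact: ltn_right_neighbour.
Qed.
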